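(* Let $R$ be a semiring and let $\theta$ be a $k$-congruence on $R$. Then $R/\theta$ has a zero $0_\theta$, $0_\theta$ is an ideal of $R$, and $\kappa_{0_\theta}=\theta$.
   Context: A semiring $(R,+,\cdot)$ is a set with two binary operations such that $(R,+)$ is a commutative semigroup, $(R,\cdot)$ is a semigroup, and multiplication distributes over addition from both sides; no additive neutral element or identity is assumed. An element $0$ of a semiring $S$ is a zero of $S$ if $0+s=s$ and $0s=s0=0$ for all $s\in S$. An ideal of $R$ is a nonempty subset $A\subseteq R$ with $a+b\in A$ and $ra,ar\in A$ for all $a,b\in A$, $r\in R$. A congruence on $R$ is an equivalence relation $\equiv$ such that $a\equiv b$ implies $a+c\equiv b+c$, $ac\equiv bc$, $ca\equiv cb$ for all $a,b,c\in R$; $R/\theta$ denotes the quotient semiring of $\theta$-classes with $[x]+[y]=[x+y]$, $[x][y]=[xy]$; a zero of $R/\theta$ is a $\theta$-class, hence a subset of $R$. For an ideal $A$ of $R$, $\kappa_A$ is the congruence defined by $x\,\kappa_A\,y$ iff $x+a=y+b$ for some $a,b\in A$. A congruence $\theta$ is a $k$-congruence if $\theta=\kappa_A$ for some ideal $A$ of $R$. Throughout, $|R|\geq 2$. *)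

(* a semiring without assumed zero or identity, given by an
   explicit carrier type and two binary operations. Subsets are predicates. *)

Set Implicit Arguments.

Section Semiring.
Variables (R : Type) (add mul : R -> R -> R).

Definition is_semiring : Prop :=
  (forall a b c, add a (add b c) = add (add a b) c) /\
  (forall a b, add a b = add b a) /\
  (forall a b c, mul a (mul b c) = mul (mul a b) c) /\
  (forall a b c, mul a (add b c) = add (mul a b) (mul a c)) /\
  (forall a b c, mul (add a b) c = add (mul a c) (mul b c)).

Definition is_ideal (A : R -> Prop) : Prop :=
  (exists a, A a) /\
  (forall a b, A a -> A b -> A (add a b)) /\
  (forall r a, A a -> A (mul r a) /\ A (mul a r)).

Definition is_congruence (th : R -> R -> Prop) : Prop :=
  (forall x, th x x) /\
  (forall x y, th x y -> th y x) /\
  (forall x y z, th x y -> th y z -> th x z) /\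
  (forall a b c, th a b -> th (add a c) (add b c) /\ th (mul a c) (mul b c)
                           /\ th (mul c a) (mul c b)).

Definition kappa (A : R -> Prop) (x y : R) : Prop :=
  exists a b, A a /\ A b /\ add x a = add y b.

Definition same_rel (r1 r2 : R -> R -> Prop) : Prop :=
  forall x y, r1 x y <-> r2 x y.

Definition is_k_congruence (th : R -> R -> Prop) : Prop :=
  is_congruence th /\ exists A, is_ideal A /\ same_rel th (kappa A).

Definition th_class (th : R -> R -> Prop) (x : R) : R -> Prop := fun y => th x y.

(* Z is a zero of the quotient semiring R/theta: Z is a theta-class [z] with
   [z]+[s] = [s] and [z][s] = [s][z] = [z] for every s. Classes are compared
   as subsets of R (extensionally). *)
Definition is_quot_zero (th : R -> R -> Prop) (Z : R -> Prop) : Prop :=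
  exists z, (forall y, Z y <-> th_class th z y) /\
    forall s, (forall y, th_class th (add z s) y <-> th_class th s y) /\
              (forall y, th_class th (mul z s) y <-> th_class th z y) /\
              (forall y, th_class th (mul s z) y <-> th_class th z y).

End Semiring.


Set Implicit Arguments.

(* Each element a of the ideal A is a zero of R/kappa_A, because
   (a + s) + a = s + (a + a) and a s, s a, a all lie in A.  Any two zeros z, z'
   are congruent (z ~ z z' ~ z'), so the zero class contains A, and
   theta = kappa_A is contained in kappa of the zero class.  Conversely
   x ~ x + c for every c in the zero class, so x + c = y + d forces x ~ y. *)

Section QuotientZero.

Variables (R : Type) (add mul : R -> R -> R) (th : R -> R -> Prop).

Hypothesis add_assoc : forall a b c, add a (add b c) = add (add a b) c.
Hypothesis add_comm : forall a b, add a b = add b a.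
Hypothesis th_congr : is_congruence add mul th.

Definition is_zero_elt (z : R) : Prop :=
  forall s, th (add z s) s /\ th (mul z s) z /\ th (mul s z) z.

Lemma quot_zero_zero_elt (Z : R -> Prop) :
  is_quot_zero add mul th Z ->
  exists z, (forall y, Z y <-> th z y) /\ is_zero_elt z.
Proof.
  destruct th_congr as [th_refl _].
  intros [z [HZ Hz]]. exists z. split; [exact HZ|].
  intros s. destruct (Hz s) as [Hadd [Hmulr Hmull]]. unfold th_class in *.
  repeat split; [apply Hadd | apply Hmulr | apply Hmull]; apply th_refl.
Qed.

Lemma zero_elt_quot_zero (z : R) :
  is_zero_elt z -> is_quot_zero add mul th (th_class th z).
Proof.
  destruct th_congr as [_ [th_sym [th_trans _]]].
  intros Hz. exists z. split; [tauto|].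
  intros s. destruct (Hz s) as [Hadd [Hmulr Hmull]]. unfold th_class.
  repeat split; intros H; eauto.
Qed.

Lemma zero_elt_unique (z z' : R) : is_zero_elt z -> is_zero_elt z' -> th z z'.
Proof.
  destruct th_congr as [_ [th_sym [th_trans _]]].
  intros Hz Hz'. apply th_trans with (mul z z').
  - apply th_sym, (Hz z').
  - apply (Hz' z).
Qed.

Lemma ideal_elt_zero_elt (A : R -> Prop) (a : R) :
  is_ideal add mul A -> same_rel th (kappa add A) -> A a -> is_zero_elt a.
Proof.
  intros [_ [A_add A_mul]] HA Ha s. repeat split; apply HA.
  - exists a, (add a a). repeat split; auto.
    rewrite (add_comm a s), <- add_assoc. reflexivity.
  - exists a, (mul a s). repeat split; [exact Ha | apply (A_mul s a Ha) | apply add_comm].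
  - exists a, (mul s a). repeat split; [exact Ha | apply (A_mul s a Ha) | apply add_comm].
Qed.

Section ZeroClass.

Variables (Z : R -> Prop) (z : R).
Hypothesis Z_class : forall y, Z y <-> th z y.
Hypothesis z_zero : is_zero_elt z.

Lemma zero_class_ideal : is_ideal add mul Z.
Proof.
  destruct th_congr as [th_refl [th_sym [th_trans th_compat]]].
  split; [|split].
  - exists z. apply Z_class, th_refl.
  - intros a b Ha%Z_class Hb%Z_class. apply Z_class, th_trans with b; [exact Hb|].
    apply th_sym, th_trans with (add z b).
    + apply (th_compat _ _ b), th_sym, Ha.
    + apply (z_zero b).
  - intros r a Ha%Z_class. split; apply Z_class.
    + apply th_trans with (mul r z); [apply th_sym, (z_zero r)|].
      apply (th_compat _ _ r Ha).
    + apply th_trans with (mul z r); [apply th_sym, (z_zero r)|].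
      apply (th_compat _ _ r Ha).
Qed.

Lemma kappa_zero_class_sub (x y : R) : kappa add Z x y -> th x y.
Proof.
  destruct th_congr as [_ [th_sym [th_trans th_compat]]].
  intros [a [b [Ha%Z_class [Hb%Z_class Exy]]]].
  assert (absorb : forall u c, th z c -> th u (add u c)).
  { intros u c Hc. apply th_trans with (add u z).
    - rewrite add_comm. apply th_sym, (z_zero u).
    - rewrite (add_comm u z), (add_comm u c). apply (th_compat _ _ u Hc). }
  apply th_trans with (add x a); [now apply absorb|].
  rewrite Exy. now apply th_sym, absorb.
Qed.

Lemma kappa_sub_zero_class (A : R -> Prop) (x y : R) :
  is_ideal add mul A -> same_rel th (kappa add A) -> th x y -> kappa add Z x y.
Proof.
  intros IA HA Hxy. apply HA in Hxy.
  destruct Hxy as [a [b [Ha [Hb Exy]]]].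
  exists a, b.
  repeat split; [| |exact Exy]; apply Z_class, zero_elt_unique;
    eauto using ideal_elt_zero_elt.
Qed.

End ZeroClass.

End QuotientZero.

Theorem lemma3p6 (R : Type) (add mul : R -> R -> R) (th : R -> R -> Prop) :
  is_semiring add mul ->
  (exists x y : R, x <> y) ->
  is_k_congruence add mul th ->
  (exists Z : R -> Prop, is_quot_zero add mul th Z) /\
  (forall Z : R -> Prop, is_quot_zero add mul th Z ->
     is_ideal add mul Z /\ same_rel (kappa add Z) th).
Proof.
  intros [add_assoc [add_comm _]] _ [th_congr [A [IA HA]]].
  split.
  - pose proof IA as [[a Ha] _].
    exists (th_class th a).
    apply zero_elt_quot_zero; [exact th_congr|].
    exact (ideal_elt_zero_elt add_assoc add_comm a IA HA Ha).
  - intros Z HZ.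
    destruct (quot_zero_zero_elt th_congr HZ) as [z [Z_class z_zero]].
    split.
    + eapply zero_class_ideal; eassumption.
    + intros x y; split.
      * eapply kappa_zero_class_sub; eassumption.
      * eapply kappa_sub_zero_class; eassumption.
Qed.
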